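(* Let $n$ be a power of 2 and $A\subseteq\{0,1\}^{\log n}$ arbitrary. For every $\epsilon>0$, $P_A=\{x\in\{0,1\}^n:\exists y\in A,\ x=h(y)\}$ has a classical nonadaptive property tester with distance parameter $\epsilon$ and one-sided error making $O(1/\epsilon+\log n)$ queries.
   Context: Logarithms are base 2; positions $i$ are identified with vectors in $\mathbb{F}_2^{\log n}$ and $h(y)_i=y\cdot i$ over $\mathbb{F}_2$ (Hadamard code). $x$ is $\epsilon$-far from $P$ if it differs from every element of $P$ in more than $\epsilon n$ positions. A classical property tester with distance parameter $\epsilon$ accepts every $x\in P$ with probability $\ge 2/3$ and every $\epsilon$-far $x$ with probability $\le 1/3$; one-sided error means elements of $P$ are accepted with probability $1$; nonadaptive means the query positions are chosen independently of previous answers. *)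

From HB Require Import structures.
From mathcomp Require Import all_boot all_order all_algebra.
From mathcomp Require Import reals.
Set Implicit Arguments. Unset Strict Implicit. Unset Printing Implicit Defensive.
Import Order.TTheory GRing.Theory Num.Theory.
Local Open Scope ring_scope.

(* Positions of a word of length n = 2^k are vectors of F_2^k = {0,1}^k. *)
Definition pos (k : nat) := {ffun 'I_k -> bool}.
Definition word (k : nat) := {ffun pos k -> bool}.

Definition dotF2 (k : nat) (y i : pos k) : bool :=
  \big[addb/false]_(j < k) (y j && i j).

Definition hadamard (k : nat) (y : pos k) : word k := [ffun i => dotF2 y i].

Definition P_A (k : nat) (A : {set pos k}) : {set word k} :=
  [set x | [exists y in A, x == hadamard y]].

Definition hdist (k : nat) (x z : word k) : nat := #|[set i | x i != z i]|.

Definition far (R : realType) (k : nat) (eps : R) (P : {set word k}) (x : word k) :=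
  forall z, z \in P -> eps * (2 ^ k)%:R < (hdist x z)%:R.

(* A classical nonadaptive tester making q queries: random seed o drawn from a
   finite probability space (Om, w); the seed determines the q query positions
   Q o and the decision D o applied to the vector of answers. *)
Definition accept_prob (R : realType) (k q : nat) (Om : finType) (w : Om -> R)
    (Q : Om -> 'I_q -> pos k) (D : Om -> {ffun 'I_q -> bool} -> bool)
    (x : word k) : R :=
  \sum_(o : Om) w o * (D o [ffun j => x (Q o j)])%:R.

Definition one_sided_nonadaptive_tester (R : realType) (k : nat)
    (P : {set word k}) (eps : R) (q : nat) : Prop :=
  exists (Om : finType) (w : Om -> R) (Q : Om -> 'I_q -> pos k)
         (D : Om -> {ffun 'I_q -> bool} -> bool),
    [/\ forall o, 0 <= w o,
        \sum_(o : Om) w o = 1,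
        forall x, x \in P -> accept_prob w Q D x = 1
      & forall x, far eps P x -> accept_prob w Q D x <= 3^-1].

(* The tester reads y = (x(e_a))_(a < k) off the unit vectors, rejects unless
   y \in A, and then checks x(i) = y . i at m uniformly random positions i.
   A codeword h(y) passes every check.  If x is eps-far from P_A and y \in A,
   then x disagrees with h(y) on a fraction t > eps of the positions, so all m
   checks pass with probability (1 - t)^m <= 1 / (1 + m t) <= 1/3 as soon as
   m eps >= 2.  Hence k + O(1/eps) queries suffice. *)
From HB Require Import structures.
From mathcomp Require Import all_boot all_order all_algebra.
From mathcomp Require Import reals.
From mathcomp Require Import lra.
Set Implicit Arguments. Unset Strict Implicit. Unset Printing Implicit Defensive.
Import Order.TTheory GRing.Theory Num.Theory.
Local Open Scope ring_scope.

Lemma exprB1_mulD1_le1 (R : realFieldType) (t : R) (m : nat) :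
  0 <= t -> t <= 1 -> (1 - t) ^+ m * (1 + m%:R * t) <= 1.
Proof.
move=> t0 t1; elim: m => [|m IHm]; first by rewrite mul0r addr0 mulr1.
have tm0 : 0 <= m%:R * (t * t) by rewrite mulr_ge0 ?mulr_ge0.
have step : (1 - t) * (1 + m.+1%:R * t) <= 1 + m%:R * t.
  by rewrite -natr1; nra.
rewrite exprSr -mulrA; apply: le_trans IHm.
by rewrite ler_wpM2l // exprn_ge0 // subr_ge0.
Qed.

Lemma exprn_le_third (R : realFieldType) (s eps : R) (m : nat) :
  0 <= s -> s < 1 - eps -> 2 <= m%:R * eps -> 3 * s ^+ m <= 1.
Proof.
move=> s0 s_lt m_eps.
have eps_gt0 : 0 < eps by have := ler0n R m; nra.
have m_t : 2 <= m%:R * (1 - s).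
  by apply: le_trans m_eps _; rewrite ler_wpM2l //; lra.
have := @exprB1_mulD1_le1 R (1 - s) m ltac:(lra) ltac:(lra).
rewrite opprB addrC subrK.
have sm0 : 0 <= s ^+ m by rewrite exprn_ge0.
nra.
Qed.

Lemma pow_agreement_le_third (R : realFieldType) (eps : R) (a N m : nat) :
  (0 < N)%N -> eps * N%:R < N%:R - a%:R -> 2 <= m%:R * eps ->
  (3 * a ^ m <= N ^ m)%N.
Proof.
move=> N_gt0 far_aN m_eps.
have N0 : 0 < N%:R :> R by rewrite ltr0n.
have frac_lt : a%:R / N%:R < 1 - eps :> R.
  by rewrite ltr_pdivrMr // mulrBl mul1r; lra.
have := exprn_le_third (divr_ge0 (ler0n R a) (ltW N0)) frac_lt m_eps.
rewrite expr_div_n mulrA ler_pdivrMr ?exprn_gt0 // mul1r.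
by rewrite -!natrX -natrM ler_nat.
Qed.

Section UniformTester.
Variables (R : realType) (k q : nat) (P : {set word k}) (eps : R).
Variables (Om : finType) (Q : Om -> 'I_q -> pos k).
Variable D : Om -> {ffun 'I_q -> bool} -> bool.

Definition accepting (x : word k) : {set Om} :=
  [set o | D o [ffun j => x (Q o j)]].

Lemma accept_prob_uniform (x : word k) :
  accept_prob (fun=> #|Om|%:R^-1) Q D x = #|accepting x|%:R / #|Om|%:R :> R.
Proof.
rewrite /accept_prob -mulr_sumr mulrC -natr_sum -sum1_card.
rewrite [in RHS]big_mkcond /=.
by congr (_%:R / _); apply: eq_bigr => o _; rewrite inE; case: (D o _).
Qed.

Lemma uniform_one_sided_tester :
  (0 < #|Om|)%N ->
  (forall x, x \in P -> accepting x = setT) ->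
  (forall x, far eps P x -> (3 * #|accepting x| <= #|Om|)%N) ->
  one_sided_nonadaptive_tester P eps q.
Proof.
move=> Om_gt0 complete sound.
have Om_neq0 : #|Om|%:R != 0 :> R by rewrite pnatr_eq0 -lt0n.
exists Om, (fun=> #|Om|%:R^-1), Q, D; split.
- by move=> _; rewrite invr_ge0 ler0n.
- by rewrite sumr_const -[_ *+ _]mulr_natr mulVf.
- by move=> x /complete acc_all; rewrite accept_prob_uniform acc_all cardsT divff.
move=> x /sound acc_small; rewrite accept_prob_uniform ler_pdivrMr ?ltr0n //.
by rewrite ler_pdivlMl ?ltr0n // -natrM ler_nat.
Qed.

End UniformTester.

Lemma card_pos (k : nat) : #|pos k| = (2 ^ k)%N.
Proof. by rewrite card_ffun card_bool card_ord. Qed.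

Lemma hdist_card_agree (k : nat) (x z : word k) :
  hdist x z = (2 ^ k - #|[set i | x i == z i]|)%N.
Proof.
rewrite -card_pos -(cardsC [set i | x i == z i]) addKn.
by apply: eq_card => i; rewrite !inE.
Qed.

Definition unitv (k : nat) (a : 'I_k) : pos k := [ffun j => j == a].

Lemma dotF2_unitv (k : nat) (y : pos k) (a : 'I_k) : dotF2 y (unitv a) = y a.
Proof.
rewrite /dotF2 (bigD1 a) //= ffunE eqxx andbT big1 ?addbF // => j /negbTE ja.
by rewrite ffunE ja andbF.
Qed.

Definition decode (k : nat) (x : word k) : pos k := [ffun a => x (unitv a)].

Lemma decode_hadamard (k : nat) (y : pos k) : decode (hadamard y) = y.
Proof. by apply/ffunP => a; rewrite !ffunE dotF2_unitv. Qed.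

Lemma hadamard_decodeP (k : nat) (A : {set pos k}) (x : word k) :
  (x \in P_A A) = (decode x \in A) && (x == hadamard (decode x)).
Proof.
rewrite inE; apply/existsP/andP => [[y /andP [yA /eqP ->]] | [xA x_eq]].
  by rewrite decode_hadamard yA.
by exists (decode x); rewrite xA.
Qed.

Section HadamardTester.
Variables (k m : nat) (A : {set pos k}).

Definition hadamard_seed := {ffun 'I_m -> pos k}.

(* The first k queries are the unit vectors, the last m the sampled positions. *)
Definition hadamard_queries (o : hadamard_seed) (j : 'I_(k + m)) : pos k :=
  match split j with inl a => unitv a | inr b => o b end.

Definition hadamard_decision (o : hadamard_seed)
    (ans : {ffun 'I_(k + m) -> bool}) : bool :=
  let y := [ffun a => ans (lshift m a)] in
  (y \in A) && [forall b, ans (rshift k b) == dotF2 y (o b)].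

Lemma hadamard_decision_answers (o : hadamard_seed) (x : word k) :
  hadamard_decision o [ffun j => x (hadamard_queries o j)] =
  (decode x \in A) && [forall b, x (o b) == hadamard (decode x) (o b)].
Proof.
have query_l a : hadamard_queries o (lshift m a) = unitv a.
  by rewrite /hadamard_queries (unsplitK (inl _ a)).
have query_r b : hadamard_queries o (rshift k b) = o b.
  by rewrite /hadamard_queries (unsplitK (inr _ b)).
rewrite /hadamard_decision /=.
have -> : [ffun a => [ffun j => x (hadamard_queries o j)] (lshift m a)] = decode x.
  by apply/ffunP => a; rewrite !ffunE query_l.
congr (_ && _); apply: eq_forallb => b.
by rewrite !ffunE query_r.
Qed.

Lemma card_hadamard_accepting (x : word k) : decode x \in A ->
  #|accepting hadamard_queries hadamard_decision x| =
  (#|[set i | x i == hadamard (decode x) i]| ^ m)%N.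
Proof.
move=> xA; rewrite -[in RHS](card_ord m) -card_ffun_on; apply: eq_card => o.
rewrite !inE hadamard_decision_answers xA.
by apply/forallP/ffun_onP => agree b; move: (agree b); rewrite inE.
Qed.

End HadamardTester.

Lemma hadamard_one_sided_tester (R : realType) (k m : nat) (A : {set pos k})
    (eps : R) :
  1 < eps \/ 2 <= m%:R * eps -> one_sided_nonadaptive_tester (P_A A) eps (k + m).
Proof.
move=> eps_m.
have card_seed : #|hadamard_seed k m| = ((2 ^ k) ^ m)%N.
  by rewrite card_ffun card_pos card_ord.
apply: (@uniform_one_sided_tester _ _ _ _ _ _ (@hadamard_queries k m)
  (hadamard_decision A)).
- by rewrite card_seed !expn_gt0.
- move=> x; rewrite hadamard_decodeP => /andP [xA /eqP x_eq].
  apply/setP => o; rewrite !inE hadamard_decision_answers xA.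
  by apply/forallP => b; rewrite -x_eq.
move=> x far_x; case xA : (decode x \in A); last first.
  rewrite (_ : accepting _ _ x = set0) ?cards0 //.
  by apply/setP => o; rewrite !inE hadamard_decision_answers xA.
rewrite card_hadamard_accepting // card_seed.
set agree := [set i | x i == hadamard (decode x) i].
have agree_le : (#|agree| <= 2 ^ k)%N by rewrite -card_pos max_card.
have codeword : hadamard (decode x) \in P_A A.
  by rewrite hadamard_decodeP decode_hadamard xA eqxx.
have := far_x _ codeword.
rewrite hdist_card_agree -/agree natrB // => far_agree.
case: eps_m => [eps_gt1 | m_eps]; last first.
  by apply: pow_agreement_le_third far_agree m_eps; rewrite expn_gt0.
(* For eps > 1 no word is eps-far from a nonempty P_A A. *)
have : (2 ^ k)%:R < eps * (2 ^ k)%:R :> R by rewrite ltr_pMl ?ltr0n ?expn_gt0.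
by have := ler0n R #|agree|; lra.
Qed.

Theorem mainTheorem4 (R : realType) :
  exists C : R, forall (k : nat) (A : {set pos k}) (eps : R), 0 < eps ->
    exists q : nat, q%:R <= C * (eps^-1 + k%:R) /\
      one_sided_nonadaptive_tester (P_A A) eps q.
Proof.
exists 3 => k A eps eps_gt0.
have inv_eps_gt0 : 0 < eps^-1 by rewrite invr_gt0.
have k_ge0 : 0 <= k%:R :> R by [].
have [eps_le1 | eps_gt1] := lerP eps 1; last first.
  exists (k + 0)%N; split; first by rewrite addn0; lra.
  by apply: hadamard_one_sided_tester; left.
have two_div_eps_ge0 : 0 <= 2 / eps by rewrite divr_ge0 // ltW.
pose m := (Num.truncn (2 / eps)).+1.
have m_gt : 2 / eps < m%:R by rewrite -truncn_lt_nat.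
have m_le : m%:R <= 2 / eps + 1 by rewrite /m -natr1 lerD2r -truncn_ge_nat.
have inv_eps_ge1 : 1 <= eps^-1 by rewrite invf_ge1.
exists (k + m)%N; split; first by rewrite natrD; lra.
apply: hadamard_one_sided_tester; right.
by rewrite -ler_pdivrMr // ltW.
Qed.
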